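(* For every formula $\varphi$ of $\mathcal L^{\bigcirc}_\square$: $\varphi$ is derivable in $\mathbf{wK4C}$ if and only if $\varphi$ is valid on every finite dynamic $\mathbf{wK4}$ frame.
   Context: Fix a non-empty set $\mathsf{PV}$ of propositional variables. The language $\mathcal L^{\bigcirc}_\square$ is given by $\varphi::= p\mid \varphi\wedge\varphi\mid\neg\varphi\mid\square\varphi\mid\bigcirc\varphi$ with $p\in\mathsf{PV}$; $\lozenge:=\neg\square\neg$, and $\vee,\to,\leftrightarrow,\top,\bot$ are defined as usual. Axioms and rules: Taut (all propositional tautologies); K: $\square(\varphi\to\psi)\to(\square\varphi\to\square\psi)$; w4: $\varphi\wedge\square\varphi\to\square\square\varphi$; ${\rm Next}_\neg$: $\neg\bigcirc\varphi\leftrightarrow\bigcirc\neg\varphi$; ${\rm Next}_\wedge$: $\bigcirc(\varphi\wedge\psi)\leftrightarrow\bigcirc\varphi\wedge\bigcirc\psi$; C: $\bigcirc\varphi\wedge\bigcirc\square\varphi\to\square\bigcirc\varphi$; rules modus ponens, ${\rm Nec}_\square$ (from $\varphi$ infer $\square\varphi$) and ${\rm Nec}_\bigcirc$ (from $\varphi$ infer $\bigcirc\varphi$). $\mathbf{K}$ is the logic given by Taut, K, MP, ${\rm Nec}_\square$; $\mathbf{wK4}:=\mathbf K+{\rm w4}$; $\mathbf{wK4C}:=\mathbf{wK4}+{\rm Next}_\neg+{\rm Next}_\wedge+{\rm Nec}_\bigcirc+{\rm C}$ (closed under all the rules). A dynamic Kripke frame is a triple $\langle W,\sqsubset,f\rangle$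 with $W$ a non-empty set, $\sqsubset$ a binary relation on $W$ and $f\colon W\to W$ a function which is weakly monotone: for all $w,v\in W$, $w\sqsubset v$ implies $f(w)=f(v)$ or $f(w)\sqsubset f(v)$. It is a dynamic $\mathbf{wK4}$ frame if $\sqsubset$ is weakly transitive: $w\sqsubset v\sqsubset u$ and $w\neq u$ imply $w\sqsubset u$. A valuation is a map $\nu\colon\mathsf{PV}\to\wp(W)$; truth is defined by $w\models p$ iff $w\in\nu(p)$, Boolean clauses as usual, $w\models\square\varphi$ iff $v\models\varphi$ for all $v$ with $w\sqsubset v$, and $w\models\bigcirc\varphi$ iff $f(w)\models\varphi$. A formula is valid on a frame if it is true at every point under every valuation. *)

From Stdlib Require Import List.

Set Implicit Arguments.

Section Syntax.
Variable PV : Type.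

Inductive form : Type :=
| Var : PV -> form
| And : form -> form -> form
| Neg : form -> form
| Box : form -> form
| Next : form -> form.

Definition Imp (a b : form) : form := Neg (And a (Neg b)).
Definition Or (a b : form) : form := Neg (And (Neg a) (Neg b)).
Definition Iff (a b : form) : form := And (Imp a b) (Imp b a).
Definition Dia (a : form) : form := Neg (Box (Neg a)).

(* Propositional tautologies of the modal language: formulas true under every
   Boolean assignment to the propositionally atomic subformulas
   (variables, □ψ and ○ψ), with ∧ and ¬ evaluated truth-functionally. *)
Fixpoint beval (g : form -> bool) (a : form) : bool :=
  match a with
  | And b c => andb (beval g b) (beval g c)
  | Neg b => negb (beval g b)
  | _ => g a
  end.

Definition is_taut (a : form) : Prop := forall g : form -> bool, beval g a = true.

Inductive wK4C : form -> Prop :=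
| ax_taut : forall a, is_taut a -> wK4C a
| ax_K : forall a b, wK4C (Imp (Box (Imp a b)) (Imp (Box a) (Box b)))
| ax_w4 : forall a, wK4C (Imp (And a (Box a)) (Box (Box a)))
| ax_next_neg : forall a, wK4C (Iff (Neg (Next a)) (Next (Neg a)))
| ax_next_and : forall a b, wK4C (Iff (Next (And a b)) (And (Next a) (Next b)))
| ax_C : forall a, wK4C (Imp (And (Next a) (Next (Box a))) (Box (Next a)))
| r_mp : forall a b, wK4C (Imp a b) -> wK4C a -> wK4C b
| r_nec_box : forall a, wK4C a -> wK4C (Box a)
| r_nec_next : forall a, wK4C a -> wK4C (Next a).

Fixpoint sat (W : Type) (R : W -> W -> Prop) (f : W -> W) (nu : PV -> W -> Prop)
  (w : W) (a : form) : Prop :=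
  match a with
  | Var p => nu p w
  | And b c => sat R f nu w b /\ sat R f nu w c
  | Neg b => ~ sat R f nu w b
  | Box b => forall v, R w v -> sat R f nu v b
  | Next b => sat R f nu (f w) b
  end.

End Syntax.

Arguments Var {PV}.

Definition finite_type (W : Type) : Prop := exists l : list W, forall w : W, In w l.

Definition weakly_monotone (W : Type) (R : W -> W -> Prop) (f : W -> W) : Prop :=
  forall w v, R w v -> f w = f v \/ R (f w) (f v).

Definition weakly_transitive (W : Type) (R : W -> W -> Prop) : Prop :=
  forall w v u, R w v -> R v u -> w <> u -> R w u.

Definition finite_dyn_wK4_frame (W : Type) (R : W -> W -> Prop) (f : W -> W) : Prop :=
  inhabited W /\ finite_type W /\ weakly_transitive R /\ weakly_monotone R f.

Definition valid_on (PV W : Type) (R : W -> W -> Prop) (f : W -> W) (a : form PV) : Prop :=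
  forall (nu : PV -> W -> Prop) (w : W), sat R f nu w a.

(* For completeness, let φ be a non-theorem and fix a finite list L of variables
   containing those of φ.  The canonical model of the sublanguage over L (maximal
   consistent sets, obtained by a Lindenbaum construction) is a dynamic wK4 frame:
   axiom w4 gives weak transitivity and axiom C weak monotonicity; it refutes φ.
   It is infinite, so we collapse it level by level along the ○-depth N of φ: at level
   j a world is described by its truth values on the subformulas of ○-depth ≤ j, by
   the level-(j-1) description of its f-image, and by the labels realised in and above
   its cluster.  These finitely many descriptions form the worlds of a finite dynamic
   wK4 frame (the relation is defined for arbitrary weakly transitive relations in
   Section Clusters), and a truth lemma transfers the refutation of φ to it. *)

From Stdlib Require Import List Classical ClassicalEpsilon FunctionalExtensionality
  PropExtensionality ProofIrrelevance Arith Lia.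
Import ListNotations.

Set Implicit Arguments.
Arguments And {PV}. Arguments Neg {PV}. Arguments Box {PV}. Arguments Next {PV}.

Definition dec (P : Prop) : bool := if excluded_middle_informative P then true else false.

Lemma dec_true (P : Prop) : dec P = true <-> P.
Proof. unfold dec; destruct (excluded_middle_informative P); split; auto; discriminate. Qed.

Lemma dec_iff (P Q : Prop) : (P <-> Q) -> dec P = dec Q.
Proof.
  intro H; unfold dec.
  destruct (excluded_middle_informative P), (excluded_middle_informative Q); tauto.
Qed.

Fixpoint subseqs {A} (l : list A) : list (list A) :=
  match l with [] => [[]] | a :: l => map (fun s => a :: s) (subseqs l) ++ subseqs l end.

Lemma filter_subseqs {A} (p : A -> bool) l : In (filter p l) (subseqs l).
Proof.
  induction l as [|a l IH]; simpl; auto. apply in_or_app.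
  destruct (p a); [left; apply in_map|right]; auto.
Qed.

Lemma in_filter_dec {A} (P : A -> Prop) l v : In v l -> P v -> In v (filter (fun v => dec (P v)) l).
Proof. intros H1 H2. apply filter_In; split; auto. apply dec_true; auto. Qed.

Lemma filter_dec_in {A} (P : A -> Prop) l v : In v (filter (fun v => dec (P v)) l) -> P v.
Proof. intro H. apply filter_In in H as [_ H]. apply dec_true; auto. Qed.

Fixpoint allbools (n : nat) : list (list bool) :=
  match n with
  | 0 => [[]]
  | S n => map (cons true) (allbools n) ++ map (cons false) (allbools n)
  end.

Lemma allbools_in (l : list bool) : In l (allbools (length l)).
Proof.
  induction l as [|b l IH]; simpl; auto.
  apply in_or_app. destruct b; [left|right]; apply in_map; auto.
Qed.

Lemma map_eq_in {A B} (f g : A -> B) l a : map f l = map g l -> In a l -> f a = g a.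
Proof. induction l as [|b l IH]; simpl; [tauto|]. intros H [->|Ha]; injection H; auto. Qed.

Section Representatives.
Variables (A B : Type) (a0 : A) (F : A -> B).

Definition preimage (v : B) : A := epsilon (inhabits a0) (fun y => F y = v).
Definition representative (x : A) : A := preimage (F x).

Lemma representative_spec x : F (representative x) = F x.
Proof. apply (epsilon_spec (inhabits a0) (fun y => F y = F x)). exists x; auto. Qed.

Lemma representative_eq x y : F x = F y -> representative x = representative y.
Proof. unfold representative; intros ->; reflexivity. Qed.

Lemma representative_idem x : representative (representative x) = representative x.
Proof. apply representative_eq, representative_spec. Qed.

End Representatives.

Definition top (PV : Type) (p0 : PV) : form PV := Imp (Var p0) (Var p0).

Ltac taut :=
  unfold is_taut, top, Iff, Or, Dia, Imp; let g := fresh "g" in intro g; cbn [beval];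
  repeat match goal with
  | |- context [beval g ?X] => destruct (beval g X)
  | |- context [g ?X] => destruct (g X)
  end; reflexivity.

Section DerivedRules.
Variable PV : Type.
Implicit Types a b c d : form PV.

Lemma taut_mp1 a b : is_taut (Imp a b) -> wK4C a -> wK4C b.
Proof. intros H1 H2. eapply r_mp; [apply ax_taut, H1|exact H2]. Qed.

Lemma taut_mp2 a b c : is_taut (Imp a (Imp b c)) -> wK4C a -> wK4C b -> wK4C c.
Proof. intros H1 H2 H3. eapply r_mp; [eapply taut_mp1; eauto|exact H3]. Qed.

Lemma taut_mp3 a b c d :
  is_taut (Imp a (Imp b (Imp c d))) -> wK4C a -> wK4C b -> wK4C c -> wK4C d.
Proof. intros H1 H2 H3 H4. eapply r_mp; [eapply taut_mp2; eauto|exact H4]. Qed.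

Lemma imp_trans a b c : wK4C (Imp a b) -> wK4C (Imp b c) -> wK4C (Imp a c).
Proof. apply taut_mp2. taut. Qed.

Lemma box_mono a b : wK4C (Imp a b) -> wK4C (Imp (Box a) (Box b)).
Proof. intro H. eapply r_mp; [apply ax_K|exact (r_nec_box H)]. Qed.

Lemma box_and a b : wK4C (Imp (And (Box a) (Box b)) (Box (And a b))).
Proof.
  assert (Hpair : wK4C (Imp a (Imp b (And a b)))) by (apply ax_taut; taut).
  eapply taut_mp2; [|exact (box_mono Hpair)|exact (ax_K b (And a b))]. taut.
Qed.

Lemma next_neg_in a : wK4C (Imp (Neg (Next a)) (Next (Neg a))).
Proof. eapply taut_mp1; [|exact (ax_next_neg a)]. taut. Qed.

Lemma next_neg_out a : wK4C (Imp (Next (Neg a)) (Neg (Next a))).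
Proof. eapply taut_mp1; [|exact (ax_next_neg a)]. taut. Qed.

Lemma next_and_in a b : wK4C (Imp (And (Next a) (Next b)) (Next (And a b))).
Proof. eapply taut_mp1; [|exact (ax_next_and a b)]. taut. Qed.

Lemma next_K a b : wK4C (Imp (Next (Imp a b)) (Imp (Next a) (Next b))).
Proof.
  unfold Imp at 1 2.
  eapply taut_mp3;
    [|exact (next_neg_out (And a (Neg b)))|exact (next_and_in a (Neg b))|exact (next_neg_in b)].
  taut.
Qed.

Lemma next_mono a b : wK4C (Imp a b) -> wK4C (Imp (Next a) (Next b)).
Proof. intro H. eapply r_mp; [apply next_K|exact (r_nec_next H)]. Qed.

End DerivedRules.

Section Soundness.
Variables (PV W : Type) (R : W -> W -> Prop) (f : W -> W).
Hypothesis R_wt : weakly_transitive R.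
Hypothesis f_wm : weakly_monotone R f.

Lemma beval_sat (nu : PV -> W -> Prop) (w : W) (a : form PV) :
  beval (fun b => dec (sat R f nu w b)) a = true <-> sat R f nu w a.
Proof.
  induction a; simpl; [apply dec_true| | |apply dec_true|apply dec_true].
  - rewrite Bool.andb_true_iff, IHa1, IHa2. tauto.
  - rewrite Bool.negb_true_iff, <- IHa. destruct (beval _ a); split; congruence.
Qed.

Lemma soundness (a : form PV) : wK4C a -> forall nu w, sat R f nu w a.
Proof.
  induction 1; intros nu w; unfold Imp, Iff in *; simpl in *.
  - apply beval_sat, H.
  - intros [HK Hab]; apply Hab; intros [Ha Hnb]; apply Hnb; intros v Hv.
    apply NNPP; intro Hb. apply (HK v Hv). split; [apply Ha, Hv|exact Hb].
  - intros [[Ha Hba] Hnbb]. apply Hnbb. intros v Hv u Hu. apply NNPP; intro Hnu.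
    destruct (classic (w = u)) as [->|Hne]; [contradiction|].
    apply Hnu, Hba, (R_wt Hv Hu Hne).
  - tauto.
  - tauto.
  - intros [[Hfa Hfba] Hn]. apply Hn. intros v Hv.
    destruct (f_wm Hv) as [E|E]; [rewrite <- E; exact Hfa|exact (Hfba _ E)].
  - specialize (IHwK4C1 nu w). specialize (IHwK4C2 nu w). simpl in IHwK4C1. tauto.
  - intros v _; auto.
  - auto.
Qed.

End Soundness.

(* Fix a variable [p0] (to name ⊤) and a finite list [L] of variables; formulas over [L]
   form the countable sublanguage in which the canonical model is built. *)
Section FiniteLanguage.
Variable PV : Type.
Variable p0 : PV.
Variable L : list PV.
Implicit Types a b c : form PV.

Fixpoint vars a : list PV :=
  match a with
  | Var p => [p]
  | And b c => vars b ++ vars c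
  | Neg b | Box b | Next b => vars b
  end.

Definition overL a : Prop := forall p, In p (vars a) -> In p L.

Lemma overL_And a b : overL (And a b) <-> overL a /\ overL b.
Proof.
  unfold overL; simpl; split.
  - intro H; split; intros; apply H, in_or_app; auto.
  - intros [H1 H2] p Hp; apply in_app_or in Hp as [Hp|Hp]; auto.
Qed.

Lemma overL_Neg a : overL (Neg a) <-> overL a.
Proof. reflexivity. Qed.

Lemma overL_Or a b : overL (Or a b) <-> overL a /\ overL b.
Proof. unfold Or. rewrite overL_Neg, overL_And, !overL_Neg. tauto. Qed.

Lemma top_thm : wK4C (top p0).
Proof. apply ax_taut. taut. Qed.

Fixpoint big_and (l : list (form PV)) : form PV :=
  match l with [] => top p0 | a :: l => And a (big_and l) end.

Lemma big_and_app l1 l2 : wK4C (Imp (big_and (l1 ++ l2)) (And (big_and l1) (big_and l2))).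
Proof.
  induction l1 as [|b l IH]; cbn [app big_and].
  - apply ax_taut; taut.
  - eapply taut_mp1; [|exact IH]. taut.
Qed.

Lemma box_big_and l : wK4C (Imp (big_and (map Box l)) (Box (big_and l))).
Proof.
  induction l as [|b l IH]; cbn [map big_and].
  - eapply taut_mp1; [|apply r_nec_box, top_thm]. taut.
  - eapply taut_mp2; [|exact IH|apply (box_and b (big_and l))]. taut.
Qed.

Lemma next_big_and l : wK4C (Imp (big_and (map Next l)) (Next (big_and l))).
Proof.
  induction l as [|b l IH]; cbn [map big_and].
  - eapply taut_mp1; [|apply r_nec_next, top_thm]. taut.
  - eapply taut_mp2; [|exact IH|apply (next_and_in b (big_and l))]. taut.
Qed.

Lemma big_and_split_off (P : form PV -> Prop) psi l :
  (forall a, In a l -> P a \/ a = psi) ->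
  exists l', (forall a, In a l' -> P a) /\ wK4C (Imp (And (big_and l') psi) (big_and l)).
Proof.
  induction l as [|b l IH]; intro Hl.
  - exists []. split; [simpl; tauto|]. apply ax_taut; taut.
  - destruct IH as [l' [Hl' Hder]]; [intros; apply Hl; simpl; auto|].
    destruct (Hl b (or_introl eq_refl)) as [Hb| ->].
    + exists (b :: l'). split; [simpl; intros a [<-|Ha]; auto|].
      eapply taut_mp1; [|exact Hder]. cbn [big_and]. taut.
    + exists l'. split; auto. eapply taut_mp1; [|exact Hder]. cbn [big_and]. taut.
Qed.

Definition consistent (S : form PV -> Prop) : Prop :=
  forall l, (forall a, In a l -> S a) -> ~ wK4C (Neg (big_and l)).

Definition mcs (G : form PV -> Prop) : Prop :=
  (forall a, G a -> overL a) /\ consistent G /\ (forall a, overL a -> G a \/ G (Neg a)).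

Section MaximalConsistent.
Variable G : form PV -> Prop.
Hypothesis HG : mcs G.

Lemma mcs_overL a : G a -> overL a.
Proof. apply HG. Qed.

Lemma mcs_closed l a : (forall x, In x l -> G x) -> wK4C (Imp (big_and l) a) -> overL a -> G a.
Proof.
  intros Hl Hder Ha. destruct HG as [_ [Hcons Hmax]].
  destruct (Hmax a Ha) as [?|Hna]; auto. exfalso.
  apply (Hcons (Neg a :: l)).
  - simpl; intros x [<-|Hx]; auto.
  - eapply taut_mp1; [|exact Hder]. cbn [big_and]. taut.
Qed.

Lemma mcs_thm_mp a b : wK4C (Imp a b) -> G a -> overL b -> G b.
Proof.
  intros Hder Ha Hb. apply (@mcs_closed [a]); auto.
  - simpl; intros x [<-|[]]; auto.
  - eapply taut_mp1; [|exact Hder]. cbn [big_and]. taut.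
Qed.

Lemma mcs_neg a : overL a -> (G (Neg a) <-> ~ G a).
Proof.
  intros Ha. destruct HG as [_ [Hcons Hmax]]. split.
  - intros Hna Hpa. apply (Hcons [a; Neg a]).
    + simpl; intros x [<-|[<-|[]]]; auto.
    + apply ax_taut. cbn [big_and]. taut.
  - intro H. destruct (Hmax a Ha); tauto.
Qed.

Lemma mcs_and a b : overL (And a b) -> (G (And a b) <-> G a /\ G b).
Proof.
  intros Hab. pose proof Hab as [Ha Hb]%overL_And. split.
  - intro H; split; (apply (@mcs_thm_mp (And a b)); [apply ax_taut; taut|exact H|auto]).
  - intros [H1 H2]. apply (@mcs_closed [a; b]); auto.
    + simpl; intros x [<-|[<-|[]]]; auto.
    + apply ax_taut. cbn [big_and]. taut.
Qed.

Lemma mcs_or a b : G (Or a b) -> G a \/ G b.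
Proof.
  intro H. pose proof (mcs_overL H) as [Ha Hb]%overL_Or.
  assert (Hnn : overL (And (Neg a) (Neg b))) by (apply overL_And; auto).
  unfold Or in H. apply (mcs_neg Hnn) in H.
  apply NNPP; intro Hn. apply H, (mcs_and Hnn). rewrite !mcs_neg by auto. tauto.
Qed.

End MaximalConsistent.

Fixpoint forms (n : nat) : list (form PV) :=
  match n with
  | 0 => map Var L
  | S n => let F := forms n in
      F ++ flat_map (fun a => map (And a) F) F ++ map Neg F ++ map Box F ++ map Next F
  end.

Fixpoint height a : nat :=
  match a with
  | Var _ => 0
  | And b c => S (max (height b) (height c))
  | Neg b | Box b | Next b => S (height b)
  end.

Lemma forms_mono n m a : n <= m -> In a (forms n) -> In a (forms m).
Proof. induction 1; auto. intro Ha; simpl; apply in_or_app; auto. Qed.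

Lemma overL_forms a : overL a -> In a (forms (height a)).
Proof.
  induction a; intro H; simpl.
  - apply in_map, H; simpl; auto.
  - apply overL_And in H as [H1 H2].
    apply in_or_app; right; apply in_or_app; left. apply in_flat_map.
    exists a1; split; [apply (forms_mono (n := height a1)); [lia|auto]|].
    apply in_map. apply (forms_mono (n := height a2)); [lia|auto].
  - do 2 (apply in_or_app; right); apply in_or_app; left; apply in_map; auto.
  - do 3 (apply in_or_app; right); apply in_or_app; left; apply in_map; auto.
  - do 4 (apply in_or_app; right); apply in_map; auto.
Qed.

Lemma forms_overL n a : In a (forms n) -> overL a.
Proof.
  revert a; induction n; simpl; intros a H.
  - apply in_map_iff in H as [p [<- Hp]]. intros q [<-|[]]; auto.
  - repeat (apply in_app_or in H; destruct H as [H|H]);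
      try (apply in_map_iff in H as [c [<- Hc]]; exact (IHn c Hc)).
    + exact (IHn a H).
    + apply in_flat_map in H as [b [Hb H]]. apply in_map_iff in H as [c [<- Hc]].
      apply overL_And; auto.
Qed.

(* Lindenbaum's lemma: a consistent set of formulas over [L] extends to an mcs.
   The extension decides the formulas of [forms 0], [forms 1], ... one by one. *)
Section Lindenbaum.
Variable S0 : form PV -> Prop.
Hypothesis S0_cons : consistent S0.
Hypothesis S0_overL : forall a, S0 a -> overL a.

Definition consistent_with (g : list (form PV)) : Prop :=
  consistent (fun a => S0 a \/ In a g).

Definition decide (g : list (form PV)) a : list (form PV) :=
  if excluded_middle_informative (consistent_with (a :: g)) then a :: g else Neg a :: g.

(* If both [a :: g] and [¬a :: g] were inconsistent, so would be [g]. *)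
Lemma decide_consistent g a : consistent_with g -> consistent_with (decide g a).
Proof.
  unfold decide; destruct excluded_middle_informative as [H|Hincons]; intros Hg; auto.
  intros l Hl Hl_refuted. apply Hincons. intros l2 Hl2 Hl2_refuted.
  destruct (@big_and_split_off (fun x => S0 x \/ In x g) a l2) as [l2' [H1 H2]].
  { intros x Hx. destruct (Hl2 x Hx) as [?|[<-|?]]; auto. }
  destruct (@big_and_split_off (fun x => S0 x \/ In x g) (Neg a) l) as [l' [H3 H4]].
  { intros x Hx. destruct (Hl x Hx) as [?|[<-|?]]; auto. }
  assert (Hna : wK4C (Imp (big_and l2') (Neg a)))
    by (eapply taut_mp2; [|exact Hl2_refuted|exact H2]; cbn [big_and]; taut).
  assert (Ha : wK4C (Imp (big_and l') a))
    by (eapply taut_mp2; [|exact Hl_refuted|exact H4]; cbn [big_and]; taut).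
  apply (Hg (l2' ++ l')).
  - intros x Hx; apply in_app_or in Hx as [Hx|Hx]; auto.
  - eapply taut_mp3; [|exact Hna|exact Ha|apply (big_and_app l2' l')]. taut.
Qed.

Lemma decide_incl g a b : In b g -> In b (decide g a).
Proof. unfold decide; destruct excluded_middle_informative; simpl; auto. Qed.

Lemma decide_all_incl fs : forall g b, In b g -> In b (fold_left decide fs g).
Proof. induction fs as [|a fs IH]; simpl; auto. intros g b Hb; apply IH, decide_incl, Hb. Qed.

Lemma decide_all_consistent fs : forall g, consistent_with g -> consistent_with (fold_left decide fs g).
Proof. induction fs as [|a fs IH]; simpl; auto. intros g Hg; apply IH, decide_consistent, Hg. Qed.

Lemma decide_all_decides fs : forall g a, In a fs ->
  In a (fold_left decide fs g) \/ In (Neg a) (fold_left decide fs g).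
Proof.
  induction fs as [|b fs IH]; simpl; [tauto|]. intros g a [->|Ha]; auto.
  unfold decide at 2 4; destruct excluded_middle_informative; [left|right];
    apply decide_all_incl; simpl; auto.
Qed.

Lemma decide_all_overL fs : (forall a, In a fs -> overL a) -> forall g, (forall a, In a g -> overL a) ->
  forall a, In a (fold_left decide fs g) -> overL a.
Proof.
  intro Hfs. induction fs as [|b fs IH]; simpl; auto. intros g Hg. apply IH.
  - intros; apply Hfs; simpl; auto.
  - unfold decide; destruct excluded_middle_informative; simpl; intros a [<-|Ha]; auto;
      [|apply overL_Neg]; apply Hfs; simpl; auto.
Qed.

Fixpoint stage (n : nat) : list (form PV) :=
  match n with 0 => [] | S n => fold_left decide (forms n) (stage n) end.

Lemma stage_consistent n : consistent_with (stage n).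
Proof.
  induction n; simpl; [|apply decide_all_consistent, IHn].
  intros l Hl. apply S0_cons. intros a Ha; destruct (Hl a Ha) as [?|[]]; auto.
Qed.

Lemma stage_mono n m a : n <= m -> In a (stage n) -> In a (stage m).
Proof. induction 1; auto. intro Ha; simpl; apply decide_all_incl; auto. Qed.

Lemma stage_overL n a : In a (stage n) -> overL a.
Proof. revert a; induction n; simpl; [tauto|]. apply decide_all_overL; auto. apply forms_overL. Qed.

Lemma stage_bound l : (forall a, In a l -> S0 a \/ exists n, In a (stage n)) ->
  exists n, forall a, In a l -> S0 a \/ In a (stage n).
Proof.
  induction l as [|b l IH]; intro Hl; [exists 0; simpl; tauto|].
  destruct IH as [n Hn]; [intros; apply Hl; simpl; auto|].
  destruct (Hl b (or_introl eq_refl)) as [Hb|[m Hm]].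
  - exists n. simpl; intros a [<-|Ha]; auto.
  - exists (max n m). simpl; intros a [<-|Ha].
    + right; apply (stage_mono (n := m)); [lia|auto].
    + destruct (Hn a Ha); auto. right; apply (stage_mono (n := n)); [lia|auto].
Qed.

Definition lindenbaum a : Prop := S0 a \/ exists n, In a (stage n).

Lemma lindenbaum_incl a : S0 a -> lindenbaum a.
Proof. left; auto. Qed.

Lemma lindenbaum_mcs : mcs lindenbaum.
Proof.
  split; [|split].
  - intros a [H|[n H]]; [auto|eapply stage_overL; eauto].
  - intros l Hl. destruct (stage_bound l Hl) as [n Hn]. apply (stage_consistent n); auto.
  - intros a Ha.
    destruct (@decide_all_decides (forms (height a)) (stage (height a)) a (overL_forms Ha)) as [H|H];
      [left|right]; right; exists (S (height a)); auto.
Qed.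

End Lindenbaum.

End FiniteLanguage.

Section Canonical.
Variables (PV : Type) (p0 : PV) (L : list PV).
Notation overL := (overL L).
Notation mcs := (mcs p0 L).
Implicit Types a b c : form PV.

Record cworld := CWorld { th : form PV -> Prop; th_mcs : mcs th }.

Lemma cworld_eq (x y : cworld) : (forall a, th x a <-> th y a) -> x = y.
Proof.
  destruct x as [tx hx], y as [ty hy]; simpl; intro H.
  assert (tx = ty) as <-
    by (apply functional_extensionality; intro a; apply propositional_extensionality, H).
  f_equal; apply proof_irrelevance.
Qed.

Lemma th_overL (x : cworld) a : th x a -> overL a.
Proof. exact (mcs_overL (th_mcs x) a). Qed.

Lemma th_neg (x : cworld) a : overL a -> (th x (Neg a) <-> ~ th x a).
Proof. exact (@mcs_neg _ _ _ _ (th_mcs x) a). Qed.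

Lemma cworld_separate (x y : cworld) : x <> y -> exists a, th x a /\ ~ th y a.
Proof.
  intro Hne. apply NNPP; intro Hn. apply Hne, cworld_eq. intro a. split; intro Ha.
  - apply NNPP; intro Hy. apply Hn; eauto.
  - apply NNPP; intro Hx. pose proof (th_overL _ _ Ha) as Ho.
    apply Hn. exists (Neg a). rewrite !th_neg by exact Ho. tauto.
Qed.

Definition Rcan (x y : cworld) : Prop := forall a, th x (Box a) -> th y a.

(* By Next_¬ and Next_∧, the ○-preimage of an mcs is again an mcs. *)
Lemma mcs_next (G : form PV -> Prop) : mcs G -> mcs (fun a => G (Next a)).
Proof.
  intro HG. split; [|split].
  - intros a Ha. exact (mcs_overL HG _ Ha).
  - intros l Hl Hrefuted. destruct HG as [_ [Hcons _]]. apply (Hcons (map Next l)).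
    + intros a Ha. apply in_map_iff in Ha as [b [<- Hb]]. auto.
    + eapply taut_mp3;
        [|exact (r_nec_next Hrefuted)|exact (next_neg_out (big_and p0 l))|exact (next_big_and p0 l)].
      taut.
  - intros a Ha. destruct (proj2 (proj2 HG) (Next a) Ha) as [H|H]; auto.
    right. exact (mcs_thm_mp HG (next_neg_in a) H Ha).
Qed.

Definition fcan (x : cworld) : cworld := CWorld (mcs_next (th_mcs x)).

Lemma fcan_th x a : th (fcan x) a <-> th x (Next a).
Proof. reflexivity. Qed.

(* Truth lemma for □ in the canonical model: a world missing □a has a successor
   containing ¬a, obtained by Lindenbaum from {b | □b ∈ x} ∪ {¬a}. *)
Lemma canonical_box (x : cworld) a : overL a -> (th x (Box a) <-> forall y, Rcan x y -> th y a).
Proof.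
  intro Ha. split; [intros H y Hy; apply Hy, H|]. intro Hall. apply NNPP; intro Hnbox.
  set (S0 := fun b => th x (Box b) \/ b = Neg a).
  assert (S0_cons : consistent p0 S0).
  { intros l Hl Hrefuted.
    destruct (@big_and_split_off PV p0 (fun b => th x (Box b)) (Neg a) l) as [l' [Hl' Hder]].
    { intros b Hb; destruct (Hl b Hb); auto. }
    assert (Hla : wK4C (Imp (big_and p0 l') a))
      by (eapply taut_mp2; [|exact Hrefuted|exact Hder]; taut).
    apply Hnbox, (@mcs_closed _ p0 L _ (th_mcs x) (map Box l')).
    - intros b Hb. apply in_map_iff in Hb as [c [<- Hc]]; auto.
    - exact (imp_trans (box_big_and p0 l') (box_mono Hla)).
    - exact Ha. }
  assert (S0_overL : forall b, S0 b -> overL b)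
    by (intros b [Hb| ->]; [exact (th_overL _ _ Hb)|exact Ha]).
  set (y := CWorld (lindenbaum_mcs S0_cons S0_overL)).
  assert (Hy : Rcan x y) by (intros b Hb; apply lindenbaum_incl; left; auto).
  apply (th_neg y Ha); [apply lindenbaum_incl; right; auto|exact (Hall y Hy)].
Qed.

(* If x ⊏ y ⊏ z and x ≠ z, pick a ∈ x \ z; from □c ∈ x we get □(c ∨ a) ∧ (c ∨ a) ∈ x,
   hence □□(c ∨ a) ∈ x by w4, so c ∨ a ∈ z and thus c ∈ z. *)
Lemma Rcan_weakly_transitive : weakly_transitive Rcan.
Proof.
  intros x y z Hxy Hyz Hne c Hc.
  destruct (cworld_separate Hne) as [a [Ha Hza]].
  assert (Hca : overL (Or c a)) by (apply overL_Or; split; eapply th_overL; eauto).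
  assert (Hor : th x (Or c a))
    by (eapply (mcs_thm_mp (th_mcs x)); [|exact Ha|exact Hca]; apply ax_taut; taut).
  assert (Hbox : th x (Box (Or c a))).
  { eapply (mcs_thm_mp (th_mcs x)); [|exact Hc|exact Hca]. apply box_mono, ax_taut; taut. }
  assert (Hkey : th x (Box (Box (Or c a)))).
  { apply (@mcs_closed _ p0 L _ (th_mcs x) [Or c a; Box (Or c a)]).
    - simpl; intros b [<-|[<-|[]]]; auto.
    - eapply taut_mp1; [|exact (ax_w4 (Or c a))]. cbn [big_and]. taut.
    - exact Hca. }
  apply Hxy, Hyz, (mcs_or (th_mcs z)) in Hkey. tauto.
Qed.

(* Dually, axiom C makes f weakly monotone: if f(x) ≠ f(y), pick ○a ∈ x with ○a ∉ y;
   then ○□c ∈ x yields □○(c ∨ a) ∈ x, so ○(c ∨ a) ∈ y and ○c ∈ y. *)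
Lemma fcan_weakly_monotone : weakly_monotone Rcan fcan.
Proof.
  intros x y Hxy. destruct (classic (fcan x = fcan y)) as [E|Hne]; [left; auto|right].
  destruct (cworld_separate Hne) as [a [Ha Hya]]. rewrite fcan_th in Ha, Hya.
  intros c Hc. rewrite fcan_th in Hc |- *.
  assert (Hca : overL (Or c a))
    by (apply overL_Or; split; [exact (th_overL _ _ Hc)|exact (th_overL _ _ Ha)]).
  assert (Hor : th x (Next (Or c a))).
  { eapply (mcs_thm_mp (th_mcs x)); [|exact Ha|exact Hca]. apply next_mono, ax_taut; taut. }
  assert (Hbox : th x (Next (Box (Or c a)))).
  { eapply (mcs_thm_mp (th_mcs x)); [|exact Hc|exact Hca].
    apply next_mono, box_mono, ax_taut; taut. }
  assert (Hkey : th x (Box (Next (Or c a)))).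
  { apply (@mcs_closed _ p0 L _ (th_mcs x) [Next (Or c a); Next (Box (Or c a))]).
    - simpl; intros b [<-|[<-|[]]]; auto.
    - eapply taut_mp1; [|exact (ax_C (Or c a))]. cbn [big_and]. taut.
    - exact Hca. }
  apply Hxy, (mcs_or (th_mcs (fcan y))) in Hkey. tauto.
Qed.

(* A non-theorem over [L] is refuted at some canonical world: {¬φ} is consistent,
   so Lindenbaum extends it to an mcs. *)
Lemma refuting_world phi : overL phi -> ~ wK4C phi -> exists x : cworld, ~ th x phi.
Proof.
  intros Hphi Hnder.
  set (S0 := fun a => a = Neg phi).
  assert (S0_cons : consistent p0 S0).
  { intros l Hl Hrefuted.
    destruct (@big_and_split_off PV p0 (fun _ => False) (Neg phi) l) as [l' [Hl' Hder]].
    { intros a Ha; right; apply Hl; auto. }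
    destruct l' as [|a l']; [|destruct (Hl' a (or_introl eq_refl))].
    apply Hnder. eapply taut_mp3; [|exact Hrefuted|exact Hder|exact (top_thm p0)].
    cbn [big_and]. taut. }
  assert (S0_overL : forall a, S0 a -> overL a) by (intros a ->; exact Hphi).
  exists (CWorld (lindenbaum_mcs S0_cons S0_overL)).
  apply (th_neg _ Hphi). apply lindenbaum_incl. reflexivity.
Qed.

End Canonical.

Section Clusters.
Variables (W : Type) (R : W -> W -> Prop).
Hypothesis R_wt : weakly_transitive R.

Definition Rrefl (x y : W) : Prop := x = y \/ R x y.
Definition same_cluster (x u : W) : Prop := Rrefl x u /\ Rrefl u x.
Definition strictly_above (x z : W) : Prop := R x z /\ ~ Rrefl z x.

Lemma Rrefl_refl x : Rrefl x x.
Proof. left; auto. Qed.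

Lemma Rrefl_trans x y z : Rrefl x y -> Rrefl y z -> Rrefl x z.
Proof.
  intros [->|Hxy] [->|Hyz]; unfold Rrefl; auto.
  destruct (classic (x = z)) as [E|E]; auto. right; exact (R_wt Hxy Hyz E).
Qed.

Lemma Rrefl_cases x u : Rrefl x u -> same_cluster x u \/ strictly_above x u.
Proof.
  intro H. destruct (classic (Rrefl u x)) as [H'|H']; [left; split; auto|right; split; auto].
  destruct H as [->|H]; auto. exfalso; apply H', Rrefl_refl.
Qed.

Lemma same_cluster_R x u : same_cluster x u -> x <> u -> R x u.
Proof. intros [[E|H] _] N; [contradiction|auto]. Qed.

Lemma same_cluster_refl x : same_cluster x x.
Proof. split; apply Rrefl_refl. Qed.

Lemma same_cluster_iff x y u : same_cluster x y -> (same_cluster x u <-> same_cluster y u).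
Proof. intros [H1 H2]; unfold same_cluster; split; intros [H3 H4]; split; eauto using Rrefl_trans. Qed.

Lemma strictly_above_down x y u : Rrefl y x -> strictly_above x u -> strictly_above y u.
Proof.
  intros Hyx [Hxu Hux]. split.
  - destruct (classic (y = u)) as [<-|E]; [exfalso; apply Hux; auto|].
    destruct Hyx as [<-|Hyx]; auto. exact (R_wt Hyx Hxu E).
  - intro Huy; apply Hux; eauto using Rrefl_trans.
Qed.

Lemma strictly_above_iff x y u : same_cluster x y -> (strictly_above x u <-> strictly_above y u).
Proof. intros [H1 H2]; split; apply strictly_above_down; auto. Qed.

Lemma strictly_above_Rrefl x u : strictly_above x u -> Rrefl x u.
Proof. intros [H _]; right; auto. Qed.

Section Profiles.
Variable B : Type.
Variable lab : W -> B.
Variable vals : list B.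
Hypothesis lab_in : forall x, In (lab x) vals.

Definition lonely (x u : W) : Prop :=
  same_cluster x u /\ ~ R u u /\ forall u', same_cluster x u' -> lab u' = lab u -> u' = u.

Definition profile (x : W) : list B * list B * list B :=
  (filter (fun v => dec (exists u, same_cluster x u /\ lab u = v)) vals,
   filter (fun v => dec (exists u, strictly_above x u /\ lab u = v)) vals,
   filter (fun v => dec (exists u, lonely x u /\ lab u = v)) vals).

Definition profiles : list (list B * list B * list B) :=
  list_prod (list_prod (subseqs vals) (subseqs vals)) (subseqs vals).

Lemma profile_in x : In (profile x) profiles.
Proof. unfold profile, profiles. repeat apply in_prod; apply filter_subseqs. Qed.

Definition point (x : W) : B * (list B * list B * list B) := (lab x, profile x).

Lemma point_inv x y : point x = point y -> lab x = lab y /\ profile x = profile y.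
Proof. intro E. exact (conj (f_equal fst E) (f_equal snd E)). Qed.

Lemma profile_cluster x y u :
  profile x = profile y -> same_cluster x u -> exists v, same_cluster y v /\ lab u = lab v.
Proof.
  intros E Hu. assert (H : In (lab u) (fst (fst (profile x)))).
  { apply in_filter_dec; [apply lab_in|]. exists u; auto. }
  rewrite E in H. apply filter_dec_in in H as [v [H1 H2]]. exists v; auto.
Qed.

Lemma profile_above x y u :
  profile x = profile y -> strictly_above x u -> exists v, strictly_above y v /\ lab u = lab v.
Proof.
  intros E Hu. assert (H : In (lab u) (snd (fst (profile x)))).
  { apply in_filter_dec; [apply lab_in|]. exists u; auto. }
  rewrite E in H. apply filter_dec_in in H as [v [H1 H2]]. exists v; auto.
Qed.

Lemma profile_lonely x y u v :
  profile x = profile y -> lonely x u -> same_cluster y v -> lab u = lab v -> lonely y v.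
Proof.
  intros E Hu Hv Hl. assert (H : In (lab u) (snd (profile x))).
  { apply in_filter_dec; [apply lab_in|]. exists u; auto. }
  rewrite E in H. apply filter_dec_in in H as [v' [Hv' Hl']].
  assert (v = v') as <-; [|exact Hv'].
  destruct Hv' as [_ [_ Huniq]]. apply Huniq; auto. congruence.
Qed.

Lemma lonely_iff x y u : same_cluster x y -> (lonely x u <-> lonely y u).
Proof.
  intro H. unfold lonely. pose proof (same_cluster_iff u H) as E.
  split; intros [H1 [H2 H3]]; (split; [tauto|split; auto]);
    intros u' Hu'; apply H3; apply (same_cluster_iff u' H); auto.
Qed.

Lemma profile_same_cluster x y : same_cluster x y -> profile x = profile y.
Proof.
  intro H. unfold profile. f_equal; [f_equal|]; apply filter_ext; intro v; apply dec_iff.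
  - split; intros [u [H1 H2]]; exists u; split; auto; apply (same_cluster_iff u H); auto.
  - split; intros [u [H1 H2]]; exists u; split; auto; apply (strictly_above_iff u H); auto.
  - split; intros [u [H1 H2]]; exists u; split; auto; apply (lonely_iff u H); auto.
Qed.

Lemma lonely_self_point x x' : point x = point x' -> (lonely x x <-> lonely x' x').
Proof.
  intros [El Ep]%point_inv. split; intro H.
  - apply (profile_lonely Ep H); auto using same_cluster_refl.
  - apply (profile_lonely (eq_sym Ep) H); auto using same_cluster_refl.
Qed.

Definition Rfilt (x y : W) : Prop :=
  (profile x = profile y /\ (lab x <> lab y \/ ~ lonely x x)) \/
  (forall y', Rrefl y y' -> exists z, strictly_above x z /\ lab y' = lab z).

Lemma Rfilt_of_R x y : R x y -> Rfilt x y.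
Proof.
  intro H. destruct (classic (Rrefl y x)) as [Hyx|Hyx].
  - left. assert (Hc : same_cluster x y) by (split; [right|]; auto).
    split; [apply profile_same_cluster; auto|].
    apply NNPP; intro Hn. apply Hn; left; intro E.
    apply Hn; right; intros [_ [Hirr Huniq]]. assert (y = x) as -> by (apply Huniq; auto).
    contradiction.
  - right. intros y' Hy'. exists y'. split; auto. split.
    + destruct Hy' as [<-|Hy']; auto.
      destruct (classic (x = y')) as [<-|E]; [exfalso; apply Hyx; right; auto|].
      exact (R_wt H Hy' E).
    + intro H'. apply Hyx. eapply Rrefl_trans; eauto.
Qed.

Lemma Rrefl_point y y' y2 : profile y' = profile y -> Rrefl y' y2 ->
  exists v, Rrefl y v /\ lab y2 = lab v.
Proof.
  intros E Hy2. destruct (Rrefl_cases Hy2) as [Hc|Ha].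
  - destruct (profile_cluster E Hc) as [v [Hv Hl]]. exists v; split; [apply Hv|auto].
  - destruct (profile_above E Ha) as [v [Hv Hl]]. exists v; split; [apply strictly_above_Rrefl|]; auto.
Qed.

Lemma Rfilt_target x y y' : Rfilt x y -> point y = point y' -> Rfilt x y'.
Proof.
  intros HD [El Ep]%point_inv. destruct HD as [[H1 H2]|H].
  - left. split; [congruence|]. rewrite <- El; auto.
  - right. intros y2 Hy2. destruct (Rrefl_point (eq_sym Ep) Hy2) as [v [Hv Hl]].
    destruct (H v Hv) as [z [Hz Hl2]]. exists z; split; congruence.
Qed.

Lemma Rfilt_source x x' y : Rfilt x y -> point x = point x' -> Rfilt x' y.
Proof.
  intros HD E. pose proof (point_inv E) as [El Ep].
  destruct HD as [[H1 H2]|H].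
  - left. split; [congruence|]. rewrite <- El, <- (lonely_self_point E); auto.
  - right. intros y2 Hy2. destruct (H y2 Hy2) as [z [Hz Hl]].
    destruct (profile_above Ep Hz) as [v [Hv Hl2]]. exists v; split; congruence.
Qed.

Lemma Rfilt_witness x y : Rfilt x y -> exists x', R x x' /\ lab y = lab x'.
Proof.
  intros [[Ep Hlab]|H].
  - destruct (profile_cluster (eq_sym Ep) (same_cluster_refl y)) as [x' [Hx' Hl]].
    destruct (classic (x' = x)) as [->|E]; [|exists x'; split; auto; apply same_cluster_R; auto].
    destruct Hlab as [Hlab|Hnl]; [exfalso; apply Hlab; auto|].
    destruct (classic (R x x)) as [Hr|Hr]; [exists x; auto|].
    apply NNPP; intro Hn. apply Hnl. split; [apply same_cluster_refl|split; auto].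
    intros u' Hu' Hl'. apply NNPP; intro E. apply Hn. exists u'. split; [|congruence].
    apply same_cluster_R; auto.
  - destruct (H y (Rrefl_refl y)) as [z [[Hz _] Hl]]. exists z; auto.
Qed.

Lemma Rfilt_trans x y z : Rfilt x y -> Rfilt y z -> point x <> point z -> Rfilt x z.
Proof.
  intros Hxy Hyz Hne. destruct Hxy as [[H1 H2]|H]; destruct Hyz as [[H3 H4]|H'].
  - left. split; [congruence|]. left. intro E. apply Hne. unfold point. f_equal; congruence.
  - right. intros z' Hz'. destruct (H' z' Hz') as [w [Hw Hl]].
    destruct (profile_above (eq_sym H1) Hw) as [v [Hv Hl2]]. exists v; split; congruence.
  - right. intros z' Hz'. destruct (Rrefl_point (eq_sym H3) Hz') as [v [Hv Hl]].
    destruct (H v Hv) as [w [Hw Hl2]]. exists w; split; congruence.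
  - right. intros z' Hz'. destruct (H' z' Hz') as [w [Hw Hl]].
    destruct (H w (strictly_above_Rrefl Hw)) as [v [Hv Hl2]]. exists v; split; congruence.
Qed.

End Profiles.
End Clusters.

(* For j ≤ N := (○-depth of φ), the layer Σ_j consists of the subformulas of φ of ○-depth
   at most j.  Canonical worlds are labelled level by level: the level-0 label is the
   truth vector on Σ_0, and the level-(j+1) label adds to the truth vector on Σ_{j+1} the
   level-j point (label and cluster profile) of f(x).  A level-j world of the finite model
   is a representative of a level-j point; ⊏ is [Rfilt] within a level, and f goes from
   level j+1 to the representative of the image at level j (and is the identity on
   level 0). *)
Section FiniteModel.
Variables (PV : Type) (p0 : PV) (L : list PV).
Notation cworld := (cworld p0 L).
Notation overL := (overL L).
Notation Rc := (@Rcan PV p0 L).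
Variable phi : form PV.
Hypothesis phi_overL : overL phi.
Variable x0 : cworld.
Implicit Types a b c : form PV.

Fixpoint subformulas a : list (form PV) :=
  a :: match a with
       | Var _ => []
       | And b c => subformulas b ++ subformulas c
       | Neg b | Box b | Next b => subformulas b
       end.

Fixpoint next_depth a : nat :=
  match a with
  | Var _ => 0
  | And b c => max (next_depth b) (next_depth c)
  | Neg b | Box b => next_depth b
  | Next b => S (next_depth b)
  end.

Lemma subformulas_refl a : In a (subformulas a).
Proof. destruct a; simpl; auto. Qed.

Lemma subformulas_trans a b c : In b (subformulas a) -> In c (subformulas b) -> In c (subformulas a).
Proof.
  induction a; intros Hb Hc; simpl in Hb; destruct Hb as [<-|Hb]; try exact Hc; simpl; right;
    try (apply in_app_or in Hb; apply in_or_app; destruct Hb); eauto.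
Qed.

Lemma subformulas_overL a b : overL a -> In b (subformulas a) -> overL b.
Proof.
  induction a; intros Ha Hb; simpl in Hb; destruct Hb as [<-|Hb]; try exact Ha; auto.
  - destruct Hb.
  - apply overL_And in Ha as [H1 H2]. apply in_app_or in Hb as [H|H]; eauto.
Qed.

Definition depth := next_depth phi.

Definition layer (j : nat) : list (form PV) :=
  filter (fun b => next_depth b <=? j) (subformulas phi).

Lemma layer_iff j b : In b (layer j) <-> In b (subformulas phi) /\ next_depth b <= j.
Proof. unfold layer. rewrite filter_In, Nat.leb_le. tauto. Qed.

Lemma layer_overL {j b} : In b (layer j) -> overL b.
Proof. intros [H _]%layer_iff. exact (subformulas_overL _ phi_overL H). Qed.

Lemma layer_sub j b c :
  In b (layer j) -> In c (subformulas b) -> next_depth c <= next_depth b -> In c (layer j).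
Proof. rewrite !layer_iff. intros [H1 H2] H3 H4. split; [eapply subformulas_trans; eauto|lia]. Qed.

Lemma layer_And {j b c} : In (And b c) (layer j) -> In b (layer j) /\ In c (layer j).
Proof.
  intro H; split; (apply (@layer_sub j _ _ H); simpl; [right; apply in_or_app|lia]);
    auto using subformulas_refl.
Qed.

Lemma layer_Neg {j b} : In (Neg b) (layer j) -> In b (layer j).
Proof. intro H; apply (@layer_sub j _ _ H); simpl; [right; apply subformulas_refl|lia]. Qed.

Lemma layer_Box {j b} : In (Box b) (layer j) -> In b (layer j).
Proof. intro H; apply (@layer_sub j _ _ H); simpl; [right; apply subformulas_refl|lia]. Qed.

Lemma layer_Next {j b} : In (Next b) (layer j) -> exists j', j = S j' /\ In b (layer j').
Proof.
  intros [H1 H2]%layer_iff. simpl in H2. destruct j as [|j']; [lia|].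
  exists j'; split; auto. apply layer_iff; split; [|lia].
  eapply subformulas_trans; eauto. simpl; right; apply subformulas_refl.
Qed.

Lemma phi_layer : In phi (layer depth).
Proof. apply layer_iff; split; [apply subformulas_refl|unfold depth; lia]. Qed.

Definition truth_vector (j : nat) (x : cworld) : list bool := map (fun b => dec (th x b)) (layer j).

(* Labels: a truth vector and, above level 0, a canonical world standing for the
   level-below point of f(x). *)
Definition label : Type := (list bool * option cworld)%type.

Fixpoint labelling (j : nat) : (cworld -> label) * list label :=
  match j with
  | 0 => (fun x => (truth_vector 0 x, None),
          map (fun bs => (bs, None)) (allbools (length (layer 0))))
  | S j' =>
      let lab := fst (labelling j') in
      let vals := snd (labelling j') in
      let pt := point Rc lab vals in
      (fun x => (truth_vector (S j') x, Some (representative x0 pt (fcan x))),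
       flat_map (fun bs => map (fun v => (bs, Some (preimage x0 pt v))) (list_prod vals (profiles vals)))
                (allbools (length (layer (S j')))))
  end.

Definition lab (j : nat) : cworld -> label := fst (labelling j).
Definition vals (j : nat) : list label := snd (labelling j).
Definition pt (j : nat) : cworld -> label * (list label * list label * list label) :=
  point Rc (lab j) (vals j).
Definition rep (j : nat) : cworld -> cworld := representative x0 (pt j).

Lemma lab_S j x : lab (S j) x = (truth_vector (S j) x, Some (rep j (fcan x))).
Proof. reflexivity. Qed.

Lemma lab_in j x : In (lab j x) (vals j).
Proof.
  revert x; induction j as [|j IH]; intro x; unfold lab, vals; simpl.
  - apply (in_map (fun bs => (bs, @None cworld))).
    unfold truth_vector. rewrite <- (length_map (fun b => dec (th x b))). apply allbools_in.
  - apply in_flat_map. exists (truth_vector (S j) x). split.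
    + unfold truth_vector. rewrite <- (length_map (fun b => dec (th x b)) (layer (S j))).
      apply allbools_in.
    + apply in_map_iff. exists (pt j (fcan x)). split; [reflexivity|].
      apply in_prod; [apply IH|apply profile_in].
Qed.

Lemma lab_th {j x y b} : lab j x = lab j y -> In b (layer j) -> (th x b <-> th y b).
Proof.
  intros H Hb. assert (E : truth_vector j x = truth_vector j y)
    by (destruct j; exact (f_equal fst H)).
  pose proof (map_eq_in _ _ _ _ E Hb) as E2. simpl in E2.
  split; intro Hx; apply dec_true; [rewrite <- E2|rewrite E2]; apply dec_true; auto.
Qed.

Lemma rep_lab j x : lab j (rep j x) = lab j x.
Proof. exact (proj1 (point_inv (representative_spec x0 (pt j) x))). Qed.

Definition fworld : Type :=
  {p : nat * cworld | fst p <= depth /\ rep (fst p) (snd p) = snd p}.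

Definition level (w : fworld) : nat := fst (proj1_sig w).
Definition base (w : fworld) : cworld := snd (proj1_sig w).

Lemma mk_fworld_ok j x :
  fst (min j depth, rep (min j depth) x) <= depth /\
  rep (fst (min j depth, rep (min j depth) x)) (snd (min j depth, rep (min j depth) x)) =
  snd (min j depth, rep (min j depth) x).
Proof. simpl. split; [lia|apply representative_idem]. Qed.

Definition mk_fworld (j : nat) (x : cworld) : fworld :=
  exist _ (min j depth, rep (min j depth) x) (mk_fworld_ok j x).

Lemma fworld_eq (w v : fworld) : level w = level v -> base w = base v -> w = v.
Proof.
  destruct w as [[j x] Hw], v as [[k y] Hv]; unfold level, base; simpl; intros -> ->.
  f_equal; apply proof_irrelevance.
Qed.

Lemma level_le w : level w <= depth.
Proof. exact (proj1 (proj2_sig w)). Qed.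

Lemma base_rep w : rep (level w) (base w) = base w.
Proof. exact (proj2 (proj2_sig w)). Qed.

Lemma mk_level j x : j <= depth -> level (mk_fworld j x) = j.
Proof. intro H; unfold level, mk_fworld; simpl; lia. Qed.

Lemma mk_base j x : j <= depth -> base (mk_fworld j x) = rep j x.
Proof. intro H; unfold base, mk_fworld; simpl. replace (min j depth) with j by lia. reflexivity. Qed.

Lemma fworld_mk w : w = mk_fworld (level w) (base w).
Proof.
  pose proof (level_le w). apply fworld_eq; rewrite ?mk_level, ?mk_base; auto.
  symmetry; apply base_rep.
Qed.

Lemma mk_fworld_eq j x y : j <= depth -> rep j x = rep j y -> mk_fworld j x = mk_fworld j y.
Proof. intros H E. apply fworld_eq; rewrite ?mk_level, ?mk_base; auto. Qed.

Definition Rfin (w v : fworld) : Prop :=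
  level w = level v /\ Rfilt Rc (lab (level w)) (vals (level w)) (base w) (base v).

Definition ffin (w : fworld) : fworld :=
  match level w with 0 => w | S j => mk_fworld j (fcan (base w)) end.

Definition nufin (p : PV) (w : fworld) : Prop := th (base w) (Var p).

Lemma ffin_mk j x : S j <= depth -> ffin (mk_fworld (S j) x) = mk_fworld j (fcan (rep (S j) x)).
Proof. intro H. unfold ffin. rewrite (mk_level _ H), (mk_base _ H). reflexivity. Qed.

Lemma Rfin_of_Rcan j x y : j <= depth -> Rc x y -> Rfin (mk_fworld j x) (mk_fworld j y).
Proof.
  intros Hj Hxy. split; [rewrite !mk_level; auto|].
  rewrite mk_level, !mk_base by exact Hj.
  apply (Rfilt_target (lab_in j) (y := y)); [|symmetry; apply representative_spec].
  apply (Rfilt_source (lab_in j) (x := x)); [|symmetry; apply representative_spec].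
  exact (Rfilt_of_R (@Rcan_weakly_transitive _ p0 L) (lab j) (vals j) _ _ Hxy).
Qed.

Lemma Rfin_witness j x v : j <= depth -> Rfin (mk_fworld j x) v ->
  level v = j /\ exists y, Rc (rep j x) y /\ lab j (base v) = lab j y.
Proof.
  intros Hj [Hl Hv]. rewrite mk_level, mk_base in * by exact Hj.
  split; [auto|]. exact (Rfilt_witness (lab_in j) Hv).
Qed.

Lemma truth b : forall j x, j <= depth -> In b (layer j) ->
  (sat Rfin ffin nufin (mk_fworld j x) b <-> th x b).
Proof.
  induction b as [p|b1 IH1 b2 IH2|b IH|b IH|b IH]; intros j x Hj Hb; simpl.
  - unfold nufin. rewrite (mk_base _ Hj). apply (lab_th (rep_lab j x) Hb).
  - destruct (layer_And Hb) as [Hb1 Hb2]. rewrite (IH1 j x Hj Hb1), (IH2 j x Hj Hb2).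
    symmetry. exact (mcs_and (th_mcs x) (layer_overL Hb)).
  - rewrite (IH j x Hj (layer_Neg Hb)). symmetry. exact (th_neg x (layer_overL (layer_Neg Hb))).
  - pose proof (layer_Box Hb) as Hb'.
    rewrite (canonical_box x (layer_overL Hb')). split.
    + intros Hs y Hy. apply (IH j y Hj Hb'), Hs, Rfin_of_Rcan; auto.
    + intros Ht v Hv. destruct (Rfin_witness Hj Hv) as [Hlv [y [Hy Hl]]].
      assert (Hbox : th (rep j x) (Box b))
        by apply (lab_th (rep_lab j x) Hb), (canonical_box x (layer_overL Hb')), Ht.
      rewrite (fworld_mk v), Hlv, IH by (auto; congruence).
      apply (lab_th (eq_sym Hl) Hb'), Hy, Hbox.
  - destruct (layer_Next Hb) as [j' [-> Hb']].
    rewrite (ffin_mk _ Hj), (IH j' _ ltac:(lia) Hb'), fcan_th.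
    apply (lab_th (rep_lab (S j') x) Hb).
Qed.

Lemma Rfin_weakly_transitive : weakly_transitive Rfin.
Proof.
  intros w v u [E1 H1] [E2 H2] Hne. split; [congruence|].
  rewrite <- E1 in H2. apply (Rfilt_trans (lab_in _) H1 H2).
  intro E. apply Hne. apply fworld_eq; [congruence|].
  rewrite <- (base_rep w), <- (base_rep u), <- E2, <- E1.
  exact (representative_eq x0 (pt (level w)) _ _ E).
Qed.

(* Weak monotonicity is inherited from the canonical model through a witness. *)
Lemma ffin_weakly_monotone : weakly_monotone Rfin ffin.
Proof.
  intros w v [E HD]. pose proof (level_le w) as Hw. unfold ffin. rewrite <- E.
  destruct (level w) as [|j] eqn:Ej; [right; split; congruence|].
  destruct (Rfilt_witness (lab_in _) HD) as [x' [Hx' Hl]].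
  assert (Hf : rep j (fcan (base v)) = rep j (fcan x')) by (rewrite !lab_S in Hl; congruence).
  destruct (@fcan_weakly_monotone _ p0 L _ _ Hx') as [F|F].
  - left. apply mk_fworld_eq; [lia|]. rewrite Hf, F. reflexivity.
  - right. rewrite (@mk_fworld_eq j (fcan (base v)) (fcan x')) by (auto; lia).
    apply Rfin_of_Rcan; [lia|exact F].
Qed.

Lemma fworld_finite : finite_type fworld.
Proof.
  exists (flat_map (fun j => map (fun v => mk_fworld j (preimage x0 (pt j) v))
                                 (list_prod (vals j) (profiles (vals j))))
                   (seq 0 (S depth))).
  intro w. pose proof (level_le w) as Hw. apply in_flat_map. exists (level w).
  split; [apply in_seq; lia|].
  apply in_map_iff. exists (pt (level w) (base w)). split.
  - transitivity (mk_fworld (level w) (base w)); [|symmetry; apply fworld_mk].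
    apply mk_fworld_eq; [exact Hw|].
    apply representative_eq, representative_spec.
  - apply in_prod; [apply lab_in|apply profile_in].
Qed.

Lemma fworld_frame : finite_dyn_wK4_frame Rfin ffin.
Proof.
  exact (conj (inhabits (mk_fworld 0 x0))
    (conj fworld_finite (conj Rfin_weakly_transitive ffin_weakly_monotone))).
Qed.

Lemma fworld_refutes : ~ th x0 phi -> ~ valid_on Rfin ffin phi.
Proof. intros Hx Hvalid. apply Hx, (truth phi x0 (le_n _) phi_layer), Hvalid. Qed.

End FiniteModel.

Theorem mainTheorem2 (PV : Type) (HPV : inhabited PV) (phi : form PV) :
  wK4C phi <->
  (forall (W : Type) (R : W -> W -> Prop) (f : W -> W),
      finite_dyn_wK4_frame R f -> valid_on R f phi).
Proof.
  split.
  - intros Hder W R f (_ & _ & R_wt & f_wm) nu w. exact (soundness R_wt f_wm Hder nu w).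
  - intro Hvalid. apply NNPP; intro Hnder. destruct HPV as [p0].
    assert (Hphi : overL (p0 :: vars phi) phi) by (intros p Hp; right; exact Hp).
    destruct (refuting_world p0 Hphi Hnder) as [x Hx].
    apply (fworld_refutes Hphi Hx), Hvalid, fworld_frame.
Qed.
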